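(* Let $G$ be a $(3,4)$-biregular $X,Y$-bigraph in which every vertex of $X$ has degree 3 and every vertex of $Y$ has degree 4. If $G$ has a subgraph that contains every vertex of $X$ and is a $(2,4)$-biregular bigraph, then $G$ has a $P_7$-factor (and hence an interval 6-coloring).
   Context: Graphs may have multiple edges. An $X,Y$-bigraph is a bipartite graph with partite sets $X$ and $Y$. An $(a,b)$-biregular bigraph is a bipartite graph in which every vertex of one part has degree $a$ and every vertex of the other part has degree $b$. A $P_7$-factor is a spanning subgraph each of whose components is a path on 7 vertices. An interval 6-coloring is a proper edge-coloring with colors from $\{1,\dots,6\}$ such that at every vertex the colors on its incident edges form a set of consecutive integers. *)

From mathcomp Require Import all_boot.
Set Implicit Arguments. Unset Strict Implicit. Unset Printing Implicit Defensive.

(* A bipartite multigraph (an X,Y-bigraph) is given by finite vertex types X, Y,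
   a finite edge type E and, for each edge e, its endpoint ex e in X and ey e in Y.
   Parallel edges are allowed (ex, ey need not be jointly injective). *)

Section Bigraph.
Variables (X Y E : finType) (ex : E -> X) (ey : E -> Y).

Definition vtx := (X + Y)%type.

Definition incident (e : E) (v : vtx) : bool :=
  match v with inl x => ex e == x | inr y => ey e == y end.

Definition joins (e : E) (u v : vtx) : bool :=
  ((u == inl (ex e)) && (v == inr (ey e))) ||
  ((u == inr (ey e)) && (v == inl (ex e))).

Definition degX (x : X) : nat := #|[set e | ex e == x]|.
Definition degY (y : Y) : nat := #|[set e | ey e == y]|.

Definition has_sub_2_4_biregular : Prop :=
  exists (F : {set E}) (Y' : {set Y}),
    [/\ forall e, e \in F -> ey e \in Y',
        forall x : X, #|[set e in F | ex e == x]| = 2 &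
        forall y : Y, y \in Y' -> #|[set e in F | ey e == y]| = 4].

Definition is_P7 (p : 'I_7 -> vtx) (q : 'I_6 -> E) : Prop :=
  injective p /\ forall i : 'I_6, joins (q i) (p (widen_ord (leqnSn 6) i)) (p (lift ord0 i)).

(* The spanning subgraph (X + Y, F) is a P7-factor: every vertex v lies in a
   path P on 7 vertices such that the edges of F incident to vertices of P are
   exactly the edges of P; hence the component of v in (X+Y, F) is exactly P. *)
Definition is_P7_factor (F : {set E}) : Prop :=
  forall v : vtx, exists (p : 'I_7 -> vtx) (q : 'I_6 -> E),
    [/\ is_P7 p q, v \in codom p &
        [set e in F | [exists i, incident e (p i)]] = [set q i | i : 'I_6]].

Definition has_P7_factor : Prop := exists F : {set E}, is_P7_factor F.

Definition interval_coloring (k : nat) (c : E -> nat) : Prop :=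
  [/\ forall e, 1 <= c e <= k,
      forall e f (v : vtx), e != f -> incident e v -> incident f v -> c e != c f &
      forall v : vtx, exists a b : nat, forall n : nat,
        (exists2 e, incident e v & c e = n) <-> (a <= n <= b)].

Definition has_interval_coloring (k : nat) : Prop :=
  exists c : E -> nat, interval_coloring k c.

End Bigraph.

From mathcomp Require Import all_boot zify.
Set Implicit Arguments. Unset Strict Implicit. Unset Printing Implicit Defensive.

(* Each x has exactly one edge outside H, and it ends at a hub, a vertex of
   Y outside H, which has four such edges.  Three balanced (Euler)
   orientations of even-degree multigraphs give all the structure: one of H,
   so that each x has one out-edge and one in-edge in H and each vertex of H
   in Y two of each; one of the multigraph joining, for each x, the head of
   its out-edge to its hub, which marks two of the four neighbours of every
   hub ([to_hub]); and one of the multigraph joining the head of the in-edge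
   of x to the pair (hub of x, mark of x), which splits these pairs further
   ([low]).  The out-edges together with the hub edges of marked vertices
   form a P7-factor whose paths are centred at the hubs, and the three
   orientations determine an explicit interval 6-colouring vertex by vertex. *)

Section BalancedOrientation.
Variables (V E : finType).
Implicit Types (a b : E -> V) (o : E -> bool) (F G : E -> nat).

Lemma bigD2 F e1 e2 : e1 != e2 ->
  \sum_e F e = F e1 + F e2 + \sum_(e | (e != e1) && (e != e2)) F e.
Proof.
by move=> ne12; rewrite (bigD1 e1) // (bigD1 e2) 1?eq_sym //= addnA.
Qed.

Lemma eq_bigD2 F G e1 e2 : e1 != e2 -> F e1 + F e2 = G e1 + G e2 ->
  (forall e, e != e1 -> e != e2 -> F e = G e) -> \sum_e F e = \sum_e G e.
Proof.
move=> ne12 eq12 eqF; rewrite !(bigD2 _ ne12) eq12; congr (_ + _).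
by apply: eq_bigr => e /andP[]; apply: eqF.
Qed.

Lemma odd_sum_other F e1 : ~~ odd (\sum_e F e) -> odd (F e1) ->
  exists2 e2, e2 != e1 & odd (F e2).
Proof.
move=> even_sum odd1; case: (pickP (fun e => (e != e1) && odd (F e))).
  by move=> e2 /andP[]; exists e2.
move=> even_rest; have even_rest_sum : ~~ odd (\sum_(e | e != e1) F e).
  apply: (big_ind (fun n => ~~ odd n)) => //.
    by move=> m n; rewrite oddD => /negbTE-> /negbTE->.
  by move=> e ne1; move: (even_rest e); rewrite ne1 => /negbT.
by move: even_sum; rewrite (bigD1 e1) //= oddD odd1 (negbTE even_rest_sum).
Qed.

Definition tail a b o e := if o e then a e else b e.
Definition outdeg a b o v := \sum_e (tail a b o e == v : nat).
Definition degree a b v := \sum_e ((a e == v) + (b e == v)).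
Definition nonloops a b := \sum_e (a e != b e : nat).

Lemma outdegE a b o v : outdeg a b o v =
  \sum_e ((a e == v) && o e : nat) + \sum_e ((b e == v) && ~~ o e : nat).
Proof.
rewrite /outdeg -big_split; apply: eq_bigr => e _.
by rewrite /tail; case: (o e); rewrite /= ?andbT ?andbF ?addn0.
Qed.

(* Splitting off at v = b e1: the path a e1 -e1- v -e2- w becomes one edge
   a e1 -e1- w and e2 becomes a loop at v.  Degrees are unchanged, and an
   orientation of the new graph lifts back by orienting e2 so that it
   continues e1 through v. *)
Section SplitOff.
Variables (a b : E -> V) (e1 e2 : E).
Hypotheses (ne21 : e2 != e1) (odd_e2 : odd ((a e2 == b e1) + (b e2 == b e1))).

Let v := b e1.
Let s := a e2 == v.
Let w := if s then b e2 else a e2.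

Lemma split_off_ends : (if s then a e2 else b e2) = v /\ w != v.
Proof.
move: odd_e2; rewrite /w /s -/v.
by case: (a e2 =P v) => [-> | ne_av] /=; case: (b e2 =P v) => //= b_v;
  split=> //; apply/eqP.
Qed.

Lemma split_off_count z : (a e2 == z) + (b e2 == z) = (v == z) + (w == z).
Proof. by move: split_off_ends; rewrite /w; case: s => -[<- _] //; apply: addnC. Qed.

Definition split_a e := if e == e2 then v else a e.
Definition split_b e := if e == e1 then w else if e == e2 then v else b e.
Definition split_lift o e := if e == e2 then o e1 == s else o e.

Let ne12 : e1 != e2. Proof. by rewrite eq_sym. Qed.

Lemma split_off_e1 : split_a e1 = a e1 /\ split_b e1 = w.
Proof. by rewrite /split_a /split_b eqxx (negbTE ne12). Qed.

Lemma split_off_e2 : split_a e2 = v /\ split_b e2 = v.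
Proof. by rewrite /split_a /split_b eqxx (negbTE ne21). Qed.

Lemma split_off_other e : e != e1 -> e != e2 -> split_a e = a e /\ split_b e = b e.
Proof. by move=> ne1 ne2; rewrite /split_a /split_b (negbTE ne1) (negbTE ne2). Qed.

Lemma degree_split_off z : degree split_a split_b z = degree a b z.
Proof.
apply: eq_bigD2 ne12 _ _; last by move=> e ne1 ne2; case: (split_off_other ne1 ne2) => -> ->.
have [-> ->] := split_off_e1; have [-> ->] := split_off_e2.
rewrite split_off_count /v; lia.
Qed.

Lemma nonloops_split_off : a e1 != v -> nonloops split_a split_b < nonloops a b.
Proof.
move=> ne1; rewrite /nonloops !(bigD2 _ ne12).
rewrite (eq_bigr (fun e => (a e != b e : nat))); last first.
  by move=> e /andP[ne1' ne2']; case: (split_off_other ne1' ne2') => -> ->.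
have [-> ->] := split_off_e2; have [-> ->] := split_off_e1.
have ne2 : a e2 != b e2.
  by move: split_off_ends; rewrite /w; case: s => -[->] //; rewrite eq_sym.
rewrite -/v eqxx ne1 ne2 /=; case: (_ != _) => /=; lia.
Qed.

Lemma outdeg_split_off o z :
  outdeg a b (split_lift o) z = outdeg split_a split_b o z /\
  outdeg b a (split_lift o) z = outdeg split_b split_a o z.
Proof.
have lift_other e : e != e1 -> e != e2 -> split_lift o e = o e.
  by move=> _ ne2; rewrite /split_lift (negbTE ne2).
have lift_e1 : split_lift o e1 = o e1 by rewrite /split_lift (negbTE ne12).
have lift_e2 : split_lift o e2 = (o e1 == s) by rewrite /split_lift eqxx.
split; apply: (eq_bigD2 ne12) => [|e ne1 ne2]; rewrite /tail;
  try by rewrite lift_other //; case: (split_off_other ne1 ne2) => -> ->.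
all: rewrite lift_e1 lift_e2; have [-> ->] := split_off_e1; have [-> ->] := split_off_e2.
all: move: split_off_ends; rewrite /w; case: (o e1); case: s => -[-> _] /=.
all: by rewrite if_same -/v // addnC.
Qed.

End SplitOff.

Theorem balanced_orientation a b : (forall v, ~~ odd (degree a b v)) ->
  exists o, forall v, outdeg a b o v = outdeg b a o v.
Proof.
have [n] := ubnP (nonloops a b); elim: n a b => // n IH a b lt_n even_deg.
case: (pickP (fun e => a e != b e)) => [e1 ne1 | all_loops]; last first.
  exists (fun _ => true) => v; apply: eq_bigr => e _; rewrite /tail.
  by move: (all_loops e) => /= /negbFE/eqP ->.
have odd_e1 : odd ((a e1 == b e1) + (b e1 == b e1)) by rewrite (negbTE ne1) eqxx.
have [e2 ne21 odd_e2] := odd_sum_other (even_deg (b e1)) odd_e1.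
have even_split z : ~~ odd (degree (split_a a b e1 e2) (split_b a b e1 e2) z).
  by rewrite degree_split_off.
have [o bal] := IH _ _ (leq_trans (nonloops_split_off ne21 odd_e2 ne1) lt_n) even_split.
exists (split_lift a b e1 e2 o) => z.
by have [-> ->] := outdeg_split_off ne21 odd_e2 o z; apply: bal.
Qed.

End BalancedOrientation.

Lemma sum_nat_card (T : finType) (P : pred T) : \sum_t (P t : nat) = #|[set t | P t]|.
Proof. by rewrite -sum1dep_card [RHS]big_mkcond; apply: eq_bigr => t _; case: (P t). Qed.

Lemma sum_nat0 (T : finType) (P : pred T) : (forall t, ~~ P t) -> \sum_t (P t : nat) = 0.
Proof. by move=> notP; apply: big1 => t _; rewrite (negbTE (notP t)). Qed.

Lemma sum_nat_split (T : finType) (P Q : pred T) :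
  \sum_t (P t : nat) = \sum_t (P t && Q t : nat) + \sum_t (P t && ~~ Q t : nat).
Proof. by rewrite -big_split; apply: eq_bigr => t _; case: (P t); case: (Q t). Qed.

Lemma sum_nat_eqb (T : finType) (P Q : pred T) b : \sum_t (P t && (Q t == b) : nat) =
  if b then \sum_t (P t && Q t : nat) else \sum_t (P t && ~~ Q t : nat).
Proof. by case: b; apply: eq_bigr => t _; case: (Q t); rewrite ?andbT ?andbF. Qed.

Lemma sum_nat_reindex (T U : finType) (f : T -> U) (r : U -> T) (P Q : pred T) :
  (forall u, P (r u) /\ f (r u) = u) -> (forall t, P t -> t = r (f t)) ->
  \sum_t (P t && Q t : nat) = \sum_u (Q (r u) : nat).
Proof.
move=> rK fK; rewrite (partition_big f xpredT) //=; apply: eq_bigr => u _.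
have [Pr fr] := rK u; rewrite (bigD1 (r u)) /=; last by rewrite fr.
rewrite Pr big1 ?addn0 // => t /andP[/eqP ftu ntr].
by case Pt: (P t) => //=; move: ntr; rewrite (fK t Pt) ftu eqxx.
Qed.

Definition the1 (T : finType) (t0 : T) (P : pred T) := odflt t0 [pick t | P t].

Section UniqueChoice.
Variables (T : finType) (t0 : T) (P : pred T).
Hypothesis P_one : \sum_t (P t : nat) = 1.

Lemma the1P : P (the1 t0 P).
Proof.
by rewrite /the1; case: pickP => // P0; move: P_one; rewrite sum_nat0 // => t; rewrite P0.
Qed.

Lemma the1_uniq t : P t -> t = the1 t0 P.
Proof.
move=> Pt; move: P_one; rewrite sum_nat_card => /mem_card1[z eq_z].
by move: (eq_z t) (eq_z (the1 t0 P)); rewrite !inE Pt the1P => /esym/eqP-> /esym/eqP->.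
Qed.

End UniqueChoice.

Lemma map_uniq_inj_in (T U : eqType) (f : T -> U) (s : seq T) :
  uniq (map f s) -> {in s &, injective f}.
Proof.
elim: s => //= z s IH /andP[fz_notin uniq_fs] x y; rewrite !inE.
case/predU1P=> [->|xs] /predU1P[->|ys] // eq_f.
- by move: fz_notin; rewrite eq_f map_f.
- by move: fz_notin; rewrite -eq_f map_f.
- exact: IH.
Qed.

Lemma mem_flatten_filter (T U : eqType) (k : U -> seq T) (P : pred T) s t :
  (t \in flatten [seq [seq x <- k u | P x] | u <- s]) = P t && has (fun u => t \in k u) s.
Proof.
elim: s => [|u s IH] /=; first by rewrite andbF.
by rewrite mem_cat mem_filter IH andb_orr.
Qed.

Lemma eqF_of_map (T U : eqType) (f : T -> U) x y : f x != f y -> (x == y) = false.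
Proof. by apply: contraNF => /eqP->. Qed.

Lemma interval_of_perm (T : eqType) (col : T -> nat) (inc : pred T) (es : seq T) a :
  0 < size es -> (forall e, inc e = (e \in es)) -> perm_eq (map col es) (iota a (size es)) ->
  (forall e f, e != f -> inc e -> inc f -> col e != col f) /\
  exists a' b', forall n, (exists2 e, inc e & col e = n) <-> (a' <= n <= b').
Proof.
move=> es_gt0 inc_es col_es; split.
  move=> e f ne_ef; rewrite !inc_es => es_e es_f; apply: contraNN ne_ef => /eqP.
  have uniq_col : uniq (map col es) by rewrite (perm_uniq col_es) iota_uniq.
  by move/(map_uniq_inj_in uniq_col es_e es_f) ->.
exists a, (a + size es).-1 => n; split.
  case=> e; rewrite inc_es => es_e <-.
  have : col e \in iota a (size es) by rewrite -(perm_mem col_es) map_f.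
  by rewrite mem_iota; lia.
move=> n_in; have : n \in map col es.
  by rewrite (perm_mem col_es) mem_iota; lia.
by case/mapP => e es_e ->; exists e; rewrite ?inc_es.
Qed.

Section Construction.
Variables (X Y E : finType) (ex : E -> X) (ey : E -> Y).
Variables (F : {set E}) (Y' : {set Y}) (e0 : E).
Hypotheses (degX3 : forall x, degX ex x = 3) (degY4 : forall y, degY ey y = 4).
Hypotheses (F_Y' : forall e, e \in F -> ey e \in Y')
  (F_degX : forall x, #|[set e in F | ex e == x]| = 2)
  (F_degY : forall y, y \in Y' -> #|[set e in F | ey e == y]| = 4).

Lemma deg_x x : \sum_e (ex e == x : nat) = 3.
Proof. by rewrite sum_nat_card -(degX3 x). Qed.

Lemma deg_y y : \sum_e (ey e == y : nat) = 4.
Proof. by rewrite sum_nat_card -(degY4 y). Qed.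

Lemma F_deg_x x : \sum_e ((e \in F) && (ex e == x) : nat) = 2.
Proof. by rewrite sum_nat_card -(F_degX x). Qed.

Lemma F_deg_y y : y \in Y' -> \sum_e ((e \in F) && (ey e == y) : nat) = 4.
Proof. by move=> Y'y; rewrite sum_nat_card -(F_degY Y'y). Qed.

Lemma F_deg_hub c : c \notin Y' -> \sum_e ((e \in F) && (ey e == c) : nat) = 0.
Proof.
move=> hub_c; apply: sum_nat0 => e; apply/negP => /andP[/F_Y' + /eqP ey_c].
by rewrite ey_c (negbTE hub_c).
Qed.

Lemma sum_nat_splitF (P : pred E) :
  \sum_e (P e : nat) = \sum_e ((e \in F) && P e : nat) + \sum_e ((e \notin F) && P e : nat).
Proof. by rewrite -big_split; apply: eq_bigr => e _; case: (e \in F); case: (P e). Qed.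

Lemma nonF_deg_x x : \sum_e ((e \notin F) && (ex e == x) : nat) = 1.
Proof. by move: (deg_x x); rewrite sum_nat_splitF F_deg_x; lia. Qed.

Lemma nonF_deg_y y : y \in Y' -> \sum_e ((e \notin F) && (ey e == y) : nat) = 0.
Proof. by move=> Y'y; move: (deg_y y); rewrite sum_nat_splitF (F_deg_y Y'y); lia. Qed.

Lemma nonF_deg_hub c : c \notin Y' -> \sum_e ((e \notin F) && (ey e == c) : nat) = 4.
Proof. by move=> hub_c; move: (deg_y c); rewrite sum_nat_splitF (F_deg_hub hub_c); lia. Qed.

Lemma nonF_hub e : e \notin F -> ey e \notin Y'.
Proof.
move=> nFe; apply/negP => Y'e; move: (nonF_deg_y Y'e).
by rewrite (bigD1 e) //= nFe eqxx.
Qed.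

(* The vertices of [Y] outside [Y'] are the hubs; the edges outside [F] join
   each [x] to a hub.  To orient [F] we keep the edges outside [F] as loops. *)
Definition h_src e : X + Y := inl (ex e).
Definition h_dst e : X + Y := if e \in F then inr (ey e) else inl (ex e).

Lemma even_degree_h v : ~~ odd (degree h_src h_dst v).
Proof.
case: v => [x|y]; rewrite /degree.
  rewrite (eq_bigr (fun e => (ex e == x) + ((e \notin F) && (ex e == x)))).
    by rewrite big_split /= deg_x nonF_deg_x.
  by move=> e _; rewrite /h_src /h_dst; case: (e \in F).
rewrite (eq_bigr (fun e => ((e \in F) && (ey e == y) : nat))).
  by case: (boolP (y \in Y')) => [/F_deg_y | /F_deg_hub] ->.
by move=> e _; rewrite /h_src /h_dst; case: (e \in F).
Qed.

Section ForwardEdges.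
Variable o1 : E -> bool.
Hypothesis bal1 : forall v, outdeg h_src h_dst o1 v = outdeg h_dst h_src o1 v.

Definition fwd e := (e \in F) && o1 e.
Definition bwd e := (e \in F) && ~~ o1 e.

Lemma sum_nat_fwd_bwd (P : pred E) : \sum_e ((e \in F) && P e : nat) =
  \sum_e (fwd e && P e : nat) + \sum_e (bwd e && P e : nat).
Proof.
rewrite -big_split; apply: eq_bigr => e _.
by rewrite /fwd /bwd; case: (e \in F); case: (o1 e); case: (P e).
Qed.

Lemma fwd_bwd_deg_x x : \sum_e (fwd e && (ex e == x) : nat) = 1 /\
                        \sum_e (bwd e && (ex e == x) : nat) = 1.
Proof.
have := bal1 (inl x); rewrite /outdeg.
rewrite (eq_bigr (fun e => (fwd e && (ex e == x) : nat) + ((e \notin F) && (ex e == x)))); last first.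
  by move=> e _; rewrite /tail /h_src /h_dst /fwd; case: (o1 e); case: (e \in F); rewrite /= ?addn0 ?add0n.
rewrite [RHS](eq_bigr (fun e => (bwd e && (ex e == x) : nat) + ((e \notin F) && (ex e == x)))); last first.
  by move=> e _; rewrite /tail /h_src /h_dst /bwd; case: (o1 e); case: (e \in F); rewrite /= ?addn0 ?add0n.
by have := F_deg_x x; rewrite sum_nat_fwd_bwd !big_split /=; lia.
Qed.

Lemma fwd_bwd_deg_y y : y \in Y' -> \sum_e (fwd e && (ey e == y) : nat) = 2 /\
                                   \sum_e (bwd e && (ey e == y) : nat) = 2.
Proof.
move=> Y'y; have := bal1 (inr y); rewrite /outdeg.
rewrite (eq_bigr (fun e => (bwd e && (ey e == y) : nat))); last first.
  by move=> e _; rewrite /tail /h_src /h_dst /bwd; case: (o1 e); case: (e \in F); rewrite /= ?addn0 ?add0n.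
rewrite [RHS](eq_bigr (fun e => (fwd e && (ey e == y) : nat))); last first.
  by move=> e _; rewrite /tail /h_src /h_dst /fwd; case: (o1 e); case: (e \in F); rewrite /= ?addn0 ?add0n.
by have := F_deg_y Y'y; rewrite sum_nat_fwd_bwd; lia.
Qed.

Definition fwd_edge x := the1 e0 (fun e => fwd e && (ex e == x)).
Definition bwd_edge x := the1 e0 (fun e => bwd e && (ex e == x)).
Definition hub_edge x := the1 e0 (fun e => (e \notin F) && (ex e == x)).

Lemma fwd_edgeP x : fwd (fwd_edge x) /\ ex (fwd_edge x) = x.
Proof. by have /andP[-> /eqP] := the1P e0 (proj1 (fwd_bwd_deg_x x)). Qed.

Lemma bwd_edgeP x : bwd (bwd_edge x) /\ ex (bwd_edge x) = x.
Proof. by have /andP[-> /eqP] := the1P e0 (proj2 (fwd_bwd_deg_x x)). Qed.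

Lemma hub_edgeP x : hub_edge x \notin F /\ ex (hub_edge x) = x.
Proof. by have /andP[-> /eqP] := the1P e0 (nonF_deg_x x). Qed.

Lemma fwd_edge_uniq e : fwd e -> e = fwd_edge (ex e).
Proof. by move=> fwd_e; rewrite /fwd_edge; apply: (the1_uniq e0 (proj1 (fwd_bwd_deg_x (ex e)))); rewrite fwd_e /=. Qed.

Lemma bwd_edge_uniq e : bwd e -> e = bwd_edge (ex e).
Proof. by move=> bwd_e; rewrite /bwd_edge; apply: (the1_uniq e0 (proj2 (fwd_bwd_deg_x (ex e)))); rewrite bwd_e /=. Qed.

Lemma hub_edge_uniq e : e \notin F -> e = hub_edge (ex e).
Proof. by move=> nFe; rewrite /hub_edge; apply: (the1_uniq e0 (nonF_deg_x (ex e))); rewrite nFe /=. Qed.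

Lemma edge_cases e : [\/ e = fwd_edge (ex e) /\ fwd e, e = bwd_edge (ex e) /\ bwd e
                      | e = hub_edge (ex e) /\ e \notin F].
Proof.
case: (boolP (e \in F)) => Fe; last by apply: Or33; split=> //; apply: hub_edge_uniq.
have [fwd_e | bwd_e] : fwd e \/ bwd e by rewrite /fwd /bwd Fe; case: (o1 e); [left|right].
  by apply: Or31; split=> //; apply: fwd_edge_uniq.
by apply: Or32; split=> //; apply: bwd_edge_uniq.
Qed.

Definition fwd_end x := ey (fwd_edge x).
Definition bwd_end x := ey (bwd_edge x).
Definition hub x := ey (hub_edge x).

Lemma fwd_end_in x : fwd_end x \in Y'.
Proof. by apply: F_Y'; case: (fwd_edgeP x) => /andP[]. Qed.

Lemma bwd_end_in x : bwd_end x \in Y'.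
Proof. by apply: F_Y'; case: (bwd_edgeP x) => /andP[]. Qed.

Lemma hub_notin x : hub x \notin Y'.
Proof. by apply: nonF_hub; case: (hub_edgeP x). Qed.

Lemma sum_fwd_end y : \sum_x (fwd_end x == y : nat) = \sum_e (fwd e && (ey e == y) : nat).
Proof.
symmetry; apply: (sum_nat_reindex (f := ex) (r := fwd_edge) (fun e => ey e == y)).
  by move=> x; case: (fwd_edgeP x).
exact: fwd_edge_uniq.
Qed.

Lemma sum_bwd_end y : \sum_x (bwd_end x == y : nat) = \sum_e (bwd e && (ey e == y) : nat).
Proof.
symmetry; apply: (sum_nat_reindex (f := ex) (r := bwd_edge) (fun e => ey e == y)).
  by move=> x; case: (bwd_edgeP x).
exact: bwd_edge_uniq.
Qed.

Lemma sum_hub y : \sum_x (hub x == y : nat) = \sum_e ((e \notin F) && (ey e == y) : nat).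
Proof.
symmetry; apply: (sum_nat_reindex (f := ex) (r := hub_edge) (fun e => ey e == y)).
  by move=> x; case: (hub_edgeP x).
exact: hub_edge_uniq.
Qed.

Lemma fwd_end_hub x c : c \notin Y' -> (fwd_end x == c) = false.
Proof. by move=> hub_c; apply: contraNF hub_c => /eqP <-; apply: fwd_end_in. Qed.

Lemma bwd_end_hub x c : c \notin Y' -> (bwd_end x == c) = false.
Proof. by move=> hub_c; apply: contraNF hub_c => /eqP <-; apply: bwd_end_in. Qed.

Lemma hub_Y' x y : y \in Y' -> (hub x == y) = false.
Proof. by move=> Y'y; apply: contraTF Y'y => /eqP <-; apply: hub_notin. Qed.

Lemma even_degree_hub_graph y : ~~ odd (degree fwd_end hub y).
Proof.
rewrite /degree big_split /= sum_fwd_end sum_hub.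
case: (boolP (y \in Y')) => [Y'y | hub_y].
  by rewrite (proj1 (fwd_bwd_deg_y Y'y)) (nonF_deg_y Y'y).
by rewrite (nonF_deg_hub hub_y) -sum_fwd_end big1 // => x _; rewrite fwd_end_hub.
Qed.

Section HubOrientation.
Variable to_hub : X -> bool.
Hypothesis bal2 : forall y, outdeg fwd_end hub to_hub y = outdeg hub fwd_end to_hub y.

Lemma fwd_nb_count y b : y \in Y' ->
  \sum_x ((fwd_end x == y) && (to_hub x == b) : nat) = 1.
Proof.
move=> Y'y; have hub0 (P : pred X) : \sum_x ((hub x == y) && P x : nat) = 0.
  by apply: big1 => x _; rewrite hub_Y'.
have := bal2 y; rewrite !outdegE !hub0 !addn0.
have := sum_nat_split (fun x => fwd_end x == y) to_hub.
rewrite sum_fwd_end (proj1 (fwd_bwd_deg_y Y'y)) sum_nat_eqb; case: b; lia.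
Qed.

Lemma hub_nb_count c b : c \notin Y' ->
  \sum_x ((hub x == c) && (to_hub x == b) : nat) = 2.
Proof.
move=> hub_c; have fwd0 (P : pred X) : \sum_x ((fwd_end x == c) && P x : nat) = 0.
  by apply: big1 => x _; rewrite fwd_end_hub.
have := bal2 c; rewrite !outdegE !fwd0 !add0n.
have := sum_nat_split (fun x => hub x == c) to_hub.
rewrite sum_hub (nonF_deg_hub hub_c) sum_nat_eqb; case: b; lia.
Qed.

Let x0 := ex e0.

Definition fwd_nb y b := the1 x0 (fun x => (fwd_end x == y) && (to_hub x == b)).

Lemma fwd_nbP y b : y \in Y' -> fwd_end (fwd_nb y b) = y /\ to_hub (fwd_nb y b) = b.
Proof. by move=> Y'y; have /andP[/eqP-> /eqP->] := the1P x0 (fwd_nb_count b Y'y). Qed.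

Lemma fwd_nb_uniq x : x = fwd_nb (fwd_end x) (to_hub x).
Proof. by apply: (the1_uniq x0 (fwd_nb_count _ (fwd_end_in x))); rewrite /= !eqxx. Qed.

Definition l_src x : Y + Y * bool := inl (bwd_end x).
Definition l_dst x : Y + Y * bool := inr (hub x, to_hub x).

Lemma even_degree_l v : ~~ odd (degree l_src l_dst v).
Proof.
rewrite /degree; case: v => [y | [c b]].
  rewrite (eq_bigr (fun x : X => (bwd_end x == y : nat))); last by move=> x _; rewrite addn0.
  rewrite sum_bwd_end; case: (boolP (y \in Y')) => [Y'y | hub_y].
    by rewrite (proj2 (fwd_bwd_deg_y Y'y)).
  by rewrite -sum_bwd_end big1 // => x _; rewrite bwd_end_hub.
rewrite (eq_bigr (fun x : X => ((hub x == c) && (to_hub x == b) : nat))) //.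
case: (boolP (c \in Y')) => [Y'c | hub_c]; last by rewrite hub_nb_count.
by rewrite big1 // => x _; rewrite hub_Y'.
Qed.

Section LowOrientation.
Variable low : X -> bool.
Hypothesis bal3 : forall v, outdeg l_src l_dst low v = outdeg l_dst l_src low v.

Lemma bwd_nb_count y g : y \in Y' ->
  \sum_x ((bwd_end x == y) && (low x == g) : nat) = 1.
Proof.
move=> Y'y; have := bal3 (inl y); rewrite /outdeg /tail /l_src /l_dst.
rewrite (eq_bigr (fun x : X => ((bwd_end x == y) && low x : nat))); last first.
  by move=> x _; case: (low x); rewrite /= ?andbT ?andbF.
rewrite [RHS](eq_bigr (fun x : X => ((bwd_end x == y) && ~~ low x : nat))); last first.
  by move=> x _; case: (low x); rewrite /= ?andbT ?andbF.
have := sum_nat_split (fun x => bwd_end x == y) low.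
rewrite sum_bwd_end (proj2 (fwd_bwd_deg_y Y'y)) sum_nat_eqb; case: g; lia.
Qed.

Lemma hub_nb_count_low c b g : c \notin Y' ->
  \sum_x ((hub x == c) && (to_hub x == b) && (low x == g) : nat) = 1.
Proof.
move=> hub_c; rewrite sum_nat_eqb.
have := bal3 (inr (c, b)); rewrite /outdeg /tail /l_src /l_dst.
rewrite (eq_bigr (fun x : X => ((hub x == c) && (to_hub x == b) && ~~ low x : nat))); last first.
  by move=> x _; case: (low x); rewrite /= ?andbT ?andbF.
rewrite [RHS](eq_bigr (fun x : X => ((hub x == c) && (to_hub x == b) && low x : nat))); last first.
  by move=> x _; case: (low x); rewrite /= ?andbT ?andbF.
have := sum_nat_split (fun x => (hub x == c) && (to_hub x == b)) low; rewrite (hub_nb_count b hub_c); case: g; lia.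
Qed.

Definition bwd_nb y g := the1 x0 (fun x => (bwd_end x == y) && (low x == g)).
Definition hub_nb c b g :=
  the1 x0 (fun x => (hub x == c) && (to_hub x == b) && (low x == g)).

Lemma bwd_nbP y g : y \in Y' -> bwd_end (bwd_nb y g) = y /\ low (bwd_nb y g) = g.
Proof. by move=> Y'y; have /andP[/eqP-> /eqP->] := the1P x0 (bwd_nb_count g Y'y). Qed.

Lemma bwd_nb_uniq x : x = bwd_nb (bwd_end x) (low x).
Proof. by apply: (the1_uniq x0 (bwd_nb_count _ (bwd_end_in x))); rewrite /= !eqxx. Qed.

Lemma hub_nbP c b g : c \notin Y' ->
  [/\ hub (hub_nb c b g) = c, to_hub (hub_nb c b g) = b & low (hub_nb c b g) = g].
Proof.
by move=> hub_c; have /andP[/andP[/eqP-> /eqP->] /eqP->] := the1P x0 (hub_nb_count_low b g hub_c).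
Qed.

Lemma hub_nb_uniq x : x = hub_nb (hub x) (to_hub x) (low x).
Proof. by apply: (the1_uniq x0 (hub_nb_count_low _ _ (hub_notin x))); rewrite /= !eqxx. Qed.

Definition edges_at (v : X + Y) : seq E :=
  match v with
  | inl x => [:: fwd_edge x; bwd_edge x; hub_edge x]
  | inr y => if y \in Y' then
      [:: fwd_edge (fwd_nb y true); fwd_edge (fwd_nb y false);
          bwd_edge (bwd_nb y true); bwd_edge (bwd_nb y false)]
    else [:: hub_edge (hub_nb y true true); hub_edge (hub_nb y true false);
             hub_edge (hub_nb y false true); hub_edge (hub_nb y false false)]
  end.

Lemma ex_fwd_edge x : ex (fwd_edge x) = x. Proof. by case: (fwd_edgeP x). Qed.
Lemma ex_bwd_edge x : ex (bwd_edge x) = x. Proof. by case: (bwd_edgeP x). Qed.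
Lemma ex_hub_edge x : ex (hub_edge x) = x. Proof. by case: (hub_edgeP x). Qed.

Lemma joins_sym e u v : joins ex ey e u v = joins ex ey e v u.
Proof. by rewrite /joins orbC; congr orb; apply: andbC. Qed.

Lemma joins_fwd_edge x : joins ex ey (fwd_edge x) (inl x) (inr (fwd_end x)).
Proof. by rewrite /joins ex_fwd_edge !eqxx. Qed.

Lemma joins_hub_edge x : joins ex ey (hub_edge x) (inl x) (inr (hub x)).
Proof. by rewrite /joins ex_hub_edge !eqxx. Qed.

Lemma incident_edges_at_x e x : incident ex ey e (inl x) = (e \in edges_at (inl x)).
Proof.
rewrite /= !inE; apply/eqP/idP => [<- | /or3P[] /eqP->].
- by case: (edge_cases e) => -[<-]; rewrite eqxx ?orbT.
- exact: ex_fwd_edge.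
- exact: ex_bwd_edge.
- exact: ex_hub_edge.
Qed.

Lemma incident_edges_at_Y' e y : y \in Y' -> incident ex ey e (inr y) = (e \in edges_at (inr y)).
Proof.
move=> Y'y; rewrite /= Y'y !inE; apply/eqP/idP => [ey_e | /or4P[] /eqP->]; last 4 first.
- by case: (fwd_nbP true Y'y).
- by case: (fwd_nbP false Y'y).
- by case: (bwd_nbP true Y'y).
- by case: (bwd_nbP false Y'y).
case: (edge_cases e) => -[e_eq e_kind]; last by move: (nonF_hub e_kind); rewrite ey_e Y'y.
  have fwd_end_e : fwd_end (ex e) = y by rewrite /fwd_end -e_eq.
  by rewrite e_eq (fwd_nb_uniq (ex e)) fwd_end_e; case: (to_hub _); rewrite eqxx ?orbT.
have bwd_end_e : bwd_end (ex e) = y by rewrite /bwd_end -e_eq.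
by rewrite e_eq (bwd_nb_uniq (ex e)) bwd_end_e; case: (low _); rewrite eqxx ?orbT.
Qed.

Lemma incident_edges_at_hub e c : c \notin Y' -> incident ex ey e (inr c) = (e \in edges_at (inr c)).
Proof.
move=> hub_c; rewrite /= (negbTE hub_c) !inE.
apply/eqP/idP => [ey_e | /or4P[] /eqP->]; last 4 first.
- by case: (hub_nbP true true hub_c).
- by case: (hub_nbP true false hub_c).
- by case: (hub_nbP false true hub_c).
- by case: (hub_nbP false false hub_c).
case: (edge_cases e) => -[e_eq e_kind]; first 2 last.
  have hub_e : hub (ex e) = c by rewrite /hub -e_eq.
  by rewrite e_eq (hub_nb_uniq (ex e)) hub_e; case: (to_hub _); case: (low _); rewrite eqxx ?orbT.
all: by move: hub_c; rewrite -ey_e F_Y' //; case/andP: e_kind.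
Qed.

Lemma incident_edges_at e v : incident ex ey e v = (e \in edges_at v).
Proof.
case: v => [x | y]; first exact: incident_edges_at_x.
by case: (boolP (y \in Y')) => [/incident_edges_at_Y' | /incident_edges_at_hub]; apply.
Qed.

(* At [x] the colours are 1,2,3 or 4,5,6 when [to_hub x], and 2,3,4 or 3,4,5
   otherwise; at a vertex of [Y'] they are 1..4 or 3..6, at a hub 2..5.  The
   out-edge of an unmarked [x] gets 2 or 5 to fit with the 1 or 6 of the
   marked out-edge at the same vertex of [Y']. *)
Definition fwd_color x :=
  if to_hub x then (if low x then 1 else 6) else (if low (fwd_nb (fwd_end x) true) then 2 else 5).
Definition bwd_color x := if low x then 3 else 4.
Definition hub_color x :=
  if to_hub x then (if low x then 2 else 5) else (if low x then 4 else 3).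

Definition color e :=
  if fwd e then fwd_color (ex e) else if bwd e then bwd_color (ex e) else hub_color (ex e).

Lemma color_fwd_edge x : color (fwd_edge x) = fwd_color x.
Proof. by case: (fwd_edgeP x) => fwd_e ex_e; rewrite /color fwd_e ex_e. Qed.

Lemma color_bwd_edge x : color (bwd_edge x) = bwd_color x.
Proof.
case: (bwd_edgeP x) => bwd_e ex_e; rewrite /color bwd_e ex_e.
by move: bwd_e; rewrite /fwd /bwd => /andP[-> /negbTE->].
Qed.

Lemma color_hub_edge x : color (hub_edge x) = hub_color x.
Proof. by case: (hub_edgeP x) => /negbTE nFe ex_e; rewrite /color /fwd /bwd nFe ex_e. Qed.

Lemma colors_at v : exists a, perm_eq (map color (edges_at v)) (iota a (size (edges_at v))).
Proof.
case: v => [x | y] /=.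
  rewrite color_fwd_edge color_bwd_edge color_hub_edge /fwd_color /bwd_color /hub_color.
  by case: (to_hub x); case: (low x); case: (low (fwd_nb (fwd_end x) true));
    [exists 1|exists 1|exists 4|exists 4|exists 2|exists 3|exists 2|exists 3].
case: (boolP (y \in Y')) => [Y'y | hub_y] /=.
  rewrite !color_fwd_edge !color_bwd_edge /fwd_color /bwd_color.
  have [-> ->] := fwd_nbP false Y'y; have [_ ->] := fwd_nbP true Y'y.
  have [_ ->] := bwd_nbP true Y'y; have [_ ->] := bwd_nbP false Y'y.
  by case: (low _); [exists 1 | exists 3].
rewrite !color_hub_edge /hub_color; exists 2.
have [_ -> ->] := hub_nbP true true hub_y; have [_ -> ->] := hub_nbP true false hub_y.
by have [_ -> ->] := hub_nbP false true hub_y; have [_ -> ->] := hub_nbP false false hub_y.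
Qed.

Lemma color_interval : interval_coloring ex ey 6 color.
Proof.
have edges_at_gt0 v : 0 < size (edges_at v) by case: v => [x | y] //=; case: (y \in Y').
split.
- move=> e; rewrite /color /fwd_color /bwd_color /hub_color.
  by do ![case: ifP => _].
- move=> e f v; have [a0 col_v] := colors_at v.
  have [proper _] := interval_of_perm (edges_at_gt0 v) (incident_edges_at^~ v) col_v.
  exact: proper.
- move=> v; have [a0 col_v] := colors_at v.
  have [_ interval] := interval_of_perm (edges_at_gt0 v) (incident_edges_at^~ v) col_v.
  exact: interval.
Qed.

Definition factor := [set e | fwd e || (e \notin F) && to_hub (ex e)].

Lemma fwd_edge_in_factor x : fwd_edge x \in factor.
Proof. by case: (fwd_edgeP x) => fwd_e _; rewrite inE fwd_e. Qed.

Lemma bwd_edge_notin_factor x : bwd_edge x \notin factor.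
Proof.
case: (bwd_edgeP x) => /andP[Fe o1e] _.
by rewrite inE /fwd Fe (negbTE o1e).
Qed.

Lemma hub_edge_in_factor x : (hub_edge x \in factor) = to_hub x.
Proof. by case: (hub_edgeP x) => nFe ex_e; rewrite inE /fwd (negbTE nFe) ex_e. Qed.

Lemma factor_at_Y' y : y \in Y' -> [seq e <- edges_at (inr y) | e \in factor] =
  [:: fwd_edge (fwd_nb y true); fwd_edge (fwd_nb y false)].
Proof. by move=> Y'y; rewrite /= Y'y /= !fwd_edge_in_factor !(negbTE (bwd_edge_notin_factor _)). Qed.

Lemma factor_at_hub c : c \notin Y' -> [seq e <- edges_at (inr c) | e \in factor] =
  [:: hub_edge (hub_nb c true true); hub_edge (hub_nb c true false)].
Proof.
move=> hub_c; rewrite /= (negbTE hub_c) /= !hub_edge_in_factor.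
by case: (hub_nbP true true hub_c) => _ -> _; case: (hub_nbP true false hub_c) => _ -> _;
  case: (hub_nbP false true hub_c) => _ -> _; case: (hub_nbP false false hub_c) => _ -> _.
Qed.

(* The components of [factor] are the paths [path_vertices c], [c] a hub. *)
Definition arm_x c g := hub_nb c true g.
Definition arm_y c g := fwd_end (arm_x c g).
Definition arm_end c g := fwd_nb (arm_y c g) false.

Definition path_vertices c : 7.-tuple (X + Y) :=
  [tuple inl (arm_end c true); inr (arm_y c true); inl (arm_x c true); inr c;
         inl (arm_x c false); inr (arm_y c false); inl (arm_end c false)].

Definition path_edges c : 6.-tuple E :=
  [tuple fwd_edge (arm_end c true); fwd_edge (arm_x c true); hub_edge (arm_x c true);
         hub_edge (arm_x c false); fwd_edge (arm_x c false); fwd_edge (arm_end c false)].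

Section Arm.
Variable c : Y.
Hypothesis hub_c : c \notin Y'.

Lemma arm_xP g : [/\ hub (arm_x c g) = c, to_hub (arm_x c g) & low (arm_x c g) = g].
Proof. by case: (hub_nbP true g hub_c). Qed.

Lemma arm_y_in g : arm_y c g \in Y'.
Proof. exact: fwd_end_in. Qed.

Lemma arm_endP g : fwd_end (arm_end c g) = arm_y c g /\ to_hub (arm_end c g) = false.
Proof. exact: fwd_nbP (arm_y_in g). Qed.

Lemma fwd_nb_arm g : fwd_nb (arm_y c g) true = arm_x c g.
Proof. by case: (arm_xP g) => _ to_hub_x _; rewrite [RHS](fwd_nb_uniq (arm_x c g)) to_hub_x. Qed.

Lemma arm_y_neq : arm_y c true != arm_y c false.
Proof.
apply/eqP => eq_y; have := congr1 low (fwd_nb_arm true).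
by rewrite eq_y fwd_nb_arm; case: (arm_xP true) => _ _ ->; case: (arm_xP false) => _ _ ->.
Qed.

Lemma path_vertices_uniq : uniq (path_vertices c).
Proof.
have end_x g1 g2 : (arm_end c g1 == arm_x c g2) = false.
  apply: (eqF_of_map (f := to_hub)).
  by case: (arm_endP g1) => _ ->; case: (arm_xP g2) => _ ->.
have x_x : (arm_x c true == arm_x c false) = false.
  apply: (eqF_of_map (f := low)).
  by case: (arm_xP true) => _ _ ->; case: (arm_xP false) => _ _ ->.
have end_end : (arm_end c true == arm_end c false) = false.
  apply: (eqF_of_map (f := fwd_end)).
  by case: (arm_endP true) => -> _; case: (arm_endP false) => -> _; apply: arm_y_neq.
have y_c g : (arm_y c g == c) = false.
  by apply: contraNF hub_c => /eqP <-; apply: arm_y_in.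
have x_end g1 g2 : (arm_x c g1 == arm_end c g2) = false by rewrite eq_sym end_x.
have c_y g : (c == arm_y c g) = false by rewrite eq_sym y_c.
by rewrite /= !inE -!sum_eqE /= !end_x !x_end x_x end_end !y_c !c_y (negbTE arm_y_neq).
Qed.

Lemma path_is_P7 : is_P7 ex ey (tnth (path_vertices c)) (tnth (path_edges c)).
Proof.
split; first exact/tuple_uniqP/path_vertices_uniq.
have [[hub_xT _ _] [hub_xF _ _]] := (arm_xP true, arm_xP false).
have [[end_yT _] [end_yF _]] := (arm_endP true, arm_endP false).
case=> [[|[|[|[|[|[|//]]]]]] lt_i6]; rewrite !(tnth_nth (inr c)) /=.
- by have := joins_fwd_edge (arm_end c true); rewrite end_yT.
- by rewrite joins_sym joins_fwd_edge.
- by have := joins_hub_edge (arm_x c true); rewrite hub_xT.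
- by rewrite joins_sym; have := joins_hub_edge (arm_x c false); rewrite hub_xF.
- exact: joins_fwd_edge.
- by rewrite joins_sym; have := joins_fwd_edge (arm_end c false); rewrite end_yF.
Qed.

Lemma factor_at_path :
  [set e in factor | [exists i, incident ex ey e (tnth (path_vertices c) i)]] =
  [set tnth (path_edges c) i | i : 'I_6].
Proof.
have path_factor : flatten [seq [seq e <- edges_at v | e \in factor] | v <- path_vertices c]
    =i path_edges c.
  have [[_ to_hub_xT _] [_ to_hub_xF _]] := (arm_xP true, arm_xP false).
  have [[_ to_hub_eT] [_ to_hub_eF]] := (arm_endP true, arm_endP false).
  rewrite /= !fwd_edge_in_factor !(negbTE (bwd_edge_notin_factor _)) !hub_edge_in_factor.
  rewrite (factor_at_Y' (arm_y_in true)) (factor_at_Y' (arm_y_in false)) (factor_at_hub hub_c).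
  rewrite !fwd_nb_arm to_hub_xT to_hub_xF to_hub_eT to_hub_eF /=.
  by move=> e; apply/idP/idP; move: e; apply/allP; rewrite /= !inE !eqxx ?orbT.
apply/setP => e; rewrite inE.
have -> : [exists i, incident ex ey e (tnth (path_vertices c) i)] =
          has (incident ex ey e) (path_vertices c) by apply/existsP/has_tnthP.
have -> : (e \in [set tnth (path_edges c) i | i : 'I_6]) = (e \in path_edges c).
  by apply/imsetP/tnthP => [[i _ ->] | [i ->]]; exists i.
by rewrite (eq_has (incident_edges_at e)) -mem_flatten_filter path_factor.
Qed.

End Arm.

Lemma arm_of_to_hub x : to_hub x -> x = arm_x (hub x) (low x).
Proof. by move=> to_hub_x; rewrite /arm_x -to_hub_x -hub_nb_uniq. Qed.

Lemma path_vertices_cover v : exists2 c, c \notin Y' & v \in path_vertices c.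
Proof.
have arm_in c g : [/\ inl (arm_end c g) \in path_vertices c, inr (arm_y c g) \in path_vertices c
                     & inl (arm_x c g) \in path_vertices c].
  by case: g; rewrite /= !inE !eqxx ?orbT.
case: v => [x | y].
  case: (boolP (to_hub x)) => [to_hub_x | not_to_hub].
    exists (hub x); first exact: hub_notin.
    by have [_ _] := arm_in (hub x) (low x); rewrite -(arm_of_to_hub to_hub_x).
  set x' := fwd_nb (fwd_end x) true; have [fwd_end_x' to_hub_x'] := fwd_nbP true (fwd_end_in x).
  exists (hub x'); first exact: hub_notin.
  have -> : x = arm_end (hub x') (low x').
    rewrite /arm_end /arm_y -(arm_of_to_hub to_hub_x') fwd_end_x'.
    by rewrite [LHS](fwd_nb_uniq x) (negbTE not_to_hub).
  by case: (arm_in (hub x') (low x')).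
case: (boolP (y \in Y')) => [Y'y | hub_y]; last by exists y => //; rewrite /= !inE eqxx ?orbT.
set x' := fwd_nb y true; have [fwd_end_x' to_hub_x'] := fwd_nbP true Y'y.
exists (hub x'); first exact: hub_notin.
have -> : y = arm_y (hub x') (low x') by rewrite /arm_y -(arm_of_to_hub to_hub_x').
by case: (arm_in (hub x') (low x')).
Qed.

Lemma factor_is_P7_factor : is_P7_factor ex ey factor.
Proof.
move=> v; have [c hub_c v_in] := path_vertices_cover v.
exists (tnth (path_vertices c)), (tnth (path_edges c)); split.
- exact: path_is_P7.
- by case/tnthP: v_in => i ->; apply: codom_f.
- exact: factor_at_path.
Qed.

End LowOrientation.
End HubOrientation.
End ForwardEdges.

Lemma P7_factor_and_interval_coloring : has_P7_factor ex ey /\ has_interval_coloring ex ey 6.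
Proof.
have [o1 bal1] := balanced_orientation even_degree_h.
have [to_hub bal2] := balanced_orientation (even_degree_hub_graph bal1).
have [low bal3] := balanced_orientation (even_degree_l bal1 bal2).
split; [exists (factor o1 to_hub) | exists (color o1 to_hub low)].
- exact: factor_is_P7_factor bal3.
- exact: color_interval bal3.
Qed.

End Construction.

Theorem mainTheorem5 (X Y E : finType) (ex : E -> X) (ey : E -> Y) :
  (forall x : X, degX ex x = 3) ->
  (forall y : Y, degY ey y = 4) ->
  has_sub_2_4_biregular ex ey ->
  has_P7_factor ex ey /\ has_interval_coloring ex ey 6.
Proof.
move=> degX3 degY4 [F [Y' [F_Y' F_degX F_degY]]].
case: (pickP (@predT E)) => [e0 _ | no_edge].
  exact: P7_factor_and_interval_coloring e0 degX3 degY4 F_Y' F_degX F_degY.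
have card0 (P : pred E) : #|[set e | P e]| = 0 by apply: eq_card0 => e; have := no_edge e.
have no_vertex (v : X + Y) : False.
  by case: v => [x | y]; [move: (degX3 x) | move: (degY4 y)]; rewrite /degX /degY card0.
split; first by exists set0 => v; case: (no_vertex v).
by exists (fun _ => 1); split=> [e | e | v]; [move: (no_edge e) .. | case: (no_vertex v)].
Qed.
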